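(* Let $M$ be a free $\mathbb{Z}$-module of finite rank $m$, let $\beta$ be a $\mathbb{Z}$-basis of $M$, and let $\varphi\in\operatorname{End}_{\mathbb{Z}}(M)$. Regard $M$ as a $\mathbb{Z}[x]$-module via $x\cdot v=\varphi(v)$. Then $M$ has rational canonical form over $\mathbb{Z}$ if and only if the matrix $A(x)=xI_m-[\varphi]_\beta\in\mathbb{Z}[x]^{m\times m}$ has Smith normal form over $\mathbb{Z}[x]$.
   Context: A matrix $A\in R^{m\times n}$ over a commutative ring $R$ has Smith normal form (SNF) over $R$ if there exist invertible $P\in R^{m\times m}$, $Q\in R^{n\times n}$ such that $B=PAQ$ satisfies $b_{ij}=0$ for $i\ne j$ and the diagonal entries $s_i=b_{ii}$ ($1\le i\le\min\{m,n\}$) satisfy $s_1\mid s_2\mid\cdots\mid s_{\min\{m,n\}}$. $[\varphi]_\beta$ denotes the matrix of $\varphi$ in the basis $\beta$. A $\mathbb{Z}[x]$-module $M$ that is free of finite rank over $\mathbb{Z}$ has rational canonical form (RCF) over $\mathbb{Z}$ if there exist cyclic $\mathbb{Z}[x]$-submodules $V_1,\dots,V_k$ of $M$ with $M=V_1\oplus\cdots\oplus V_k$, such that $\operatorname{Ann}(V_i)=(a_i(x))$ with each $a_i(x)\in\mathbb{Z}[x]$ monic and non-constant and $a_1(x)\mid a_2(x)\mid\cdots\mid a_k(x)$. An endomorphism $\varphi$ of a free $\mathbb{Z}$-module of finite rank has RCF over $\mathbb{Z}$ if the associated $\mathbb{Z}[x]$-module (with $x$ acting by $\varphi$) has RCF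 over $\mathbb{Z}$. *)

From HB Require Import structures.
From mathcomp Require Import all_boot all_order all_algebra.
Set Implicit Arguments. Unset Strict Implicit. Unset Printing Implicit Defensive.
Import GRing.Theory.
Local Open Scope ring_scope.

(* Genuine divisibility in a commutative ring: a | b iff b = c * a for some c.
   (Not polydiv's pseudo-divisibility.) *)
Definition divides (R : comPzRingType) (a b : R) : Prop := exists c : R, b = c * a.

Definition is_Zbasis (V : zmodType) (m : nat) (b : 'I_m -> V) : Prop :=
  (forall v : V, exists c : 'I_m -> int, v = \sum_(i < m) b i *~ c i) /\
  (forall c c' : 'I_m -> int,
      \sum_(i < m) b i *~ c i = \sum_(i < m) b i *~ c' i -> forall i, c i = c' i).

Definition is_matrix_of (V : zmodType) (m : nat) (b : 'I_m -> V) (phi : V -> V)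
    (A : 'M[int]_m) : Prop :=
  forall j : 'I_m, phi (b j) = \sum_(i < m) b i *~ A i j.

(* Z[x]-module structure on V given by x . v = phi v : p . v = sum_j p_j phi^j(v). *)
Definition polyact (V : zmodType) (phi : V -> V) (p : {poly int}) (v : V) : V :=
  \sum_(j < size p) (iter j phi v) *~ p`_j.

(* Rational canonical form over Z: V = V_1 (+) ... (+) V_k with V_i = Z[x] g_i cyclic,
   Ann(V_i) = (a_i), a_i monic non-constant, a_1 | a_2 | ... | a_k. *)
Definition has_RCF (V : zmodType) (phi : V -> V) : Prop :=
  exists (k : nat) (g : 'I_k -> V) (a : 'I_k -> {poly int}),
    [/\ forall i, (a i \is monic) /\ (1 < size (a i))%N,
        forall i j : 'I_k, nat_of_ord j = (nat_of_ord i).+1 -> divides (a i) (a j),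
        forall i (p : {poly int}),
          (forall q : {poly int}, polyact phi p (polyact phi q (g i)) = 0)
          <-> divides (a i) p,
        forall v : V, exists ps : 'I_k -> {poly int},
          v = \sum_(i < k) polyact phi (ps i) (g i)
      & forall ps qs : 'I_k -> {poly int},
          \sum_(i < k) polyact phi (ps i) (g i) = \sum_(i < k) polyact phi (qs i) (g i) ->
          forall i, polyact phi (ps i) (g i) = polyact phi (qs i) (g i)].

Definition has_SNF (R : comUnitRingType) (n : nat) (A : 'M[R]_n) : Prop :=
  exists P Q : 'M[R]_n,
    [/\ P \in unitmx, Q \in unitmx,
        forall i j : 'I_n, i != j -> (P *m A *m Q) i j = 0
      & forall i j : 'I_n, nat_of_ord j = (nat_of_ord i).+1 ->
          divides ((P *m A *m Q) i i) ((P *m A *m Q) j j)].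

From HB Require Import structures.
From mathcomp Require Import all_boot all_order all_algebra.
From Stdlib Require Import ClassicalEpsilon.
Set Implicit Arguments. Unset Strict Implicit. Unset Printing Implicit Defensive.
Import GRing.Theory.

(* Over Z[x], V has the presentation Z[x]^m --(xI - A)--> Z[x]^m --> V, the
   second map sending the unit vectors to the basis b.  A Smith form
   P (xI - A) Q = diag(s_1, ..., s_m) therefore presents V on new generators
   with annihilators (s_i); as det(xI - A) is monic, every s_i has a unit
   leading coefficient, so the constant s_i are units (their generators vanish)
   and the others, made monic, are the invariant factors of a rational
   canonical form.  Conversely, a rational canonical form with invariant
   factors a_1 | ... | a_k gives the Z-basis (phi^t g_i) (t < deg a_i), so
   m = sum_i deg a_i, and V is presented by diag(1, ..., 1, a_1, ..., a_k) on
   generators related to b by an invertible matrix P over Z[x]; then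
   P (xI - A) and that diagonal matrix have the same column space, and two
   nonsingular square matrices with the same column space are equivalent. *)

Section BlockIndex.
Variables (k : nat) (e : 'I_k -> nat).

(* [block_len j] extends [e] by 0 to all of [nat], so that partial sums can be
   taken over a [nat] range. *)
Definition block_len (j : nat) : nat := \sum_(i < k | val i == j) e i.
Definition block_start (n : nat) : nat := \sum_(0 <= j < n) block_len j.
Definition blocks_end : nat := block_start k.

Lemma block_len_ord (i : 'I_k) : block_len i = e i.
Proof. by rewrite /block_len (eq_bigl (pred1 i)) ?big_pred1_eq. Qed.

Lemma block_startS n : block_start n.+1 = block_start n + block_len n.
Proof. by rewrite /block_start big_nat_recr. Qed.

Lemma leq_block_start i j : i <= j -> block_start i <= block_start j.
Proof. by move=> h; rewrite /block_start (big_cat_nat (leq0n i) h) leq_addr. Qed.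

Lemma block_start_ltS (i : 'I_k) t : t < e i -> block_start i + t < block_start i.+1.
Proof. by move=> ht; rewrite block_startS block_len_ord ltn_add2l. Qed.

Lemma block_lt_end (i : 'I_k) t : t < e i -> block_start i + t < blocks_end.
Proof.
by move=> /block_start_ltS /leq_trans; apply; apply: leq_block_start.
Qed.

Lemma block_start_ltn (i i' : 'I_k) t t' : t < e i -> i < i' ->
  block_start i + t < block_start i' + t'.
Proof.
move=> /block_start_ltS ht hii; apply: leq_trans ht (leq_trans _ (leq_addr _ _)).
exact: leq_block_start.
Qed.

Lemma block_start_inj (i i' : 'I_k) t t' : t < e i -> t' < e i' ->
  block_start i + t = block_start i' + t' -> i = i' /\ t = t'.
Proof.
move=> ht ht' h; case: (ltngtP i i') => [lt_ii'|lt_i'i|/val_inj eq_ii'].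
- by have := block_start_ltn t' ht lt_ii'; rewrite h ltnn.
- by have := block_start_ltn t ht' lt_i'i; rewrite h ltnn.
by subst i'; split=> //; apply/eqP; rewrite -(eqn_add2l (block_start i)) h.
Qed.

Lemma big_block_start (R : Type) (idx : R) (op : Monoid.law idx) (F : nat -> R) n :
  \big[op/idx]_(0 <= l < block_start n) F l =
  \big[op/idx]_(0 <= i < n) \big[op/idx]_(0 <= t < block_len i) F (block_start i + t).
Proof.
elim: n => [|n IH]; first by rewrite /block_start !big_geq.
rewrite big_nat_recr //= -IH block_startS.
rewrite (big_cat_nat (leq0n _) (leq_addr (block_len n) _)); congr (op _ _).
rewrite -{1}(add0n (block_start n)) big_addn addKn.
by apply: eq_bigr => t _; rewrite addnC.
Qed.

Lemma big_blocks (R : Type) (idx : R) (op : Monoid.com_law idx) (F : nat -> R) :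
  \big[op/idx]_(l < blocks_end + k) F l =
  \big[op/idx]_(i < k)
     op (\big[op/idx]_(t < e i) F (block_start i + t)) (F (blocks_end + i)).
Proof.
rewrite big_split /= -(big_mkord xpredT) (big_cat_nat (leq0n blocks_end)) ?leq_addr //=.
congr (op _ _).
  rewrite big_block_start big_mkord; apply: eq_bigr => i _.
  by rewrite block_len_ord big_mkord.
rewrite -{1}(add0n blocks_end) big_addn addKn big_mkord.
by apply: eq_bigr => i _; rewrite addnC.
Qed.

End BlockIndex.

Local Open Scope ring_scope.

Lemma divides_mull (R : comPzRingType) (x y z : R) : divides x y -> divides x (z * y).
Proof. by move=> [c ->]; exists (z * c); rewrite mulrA. Qed.

Lemma divides_mull_unit (R : comUnitRingType) (c x y : R) :
  c \is a GRing.unit -> divides (c * x) y <-> divides x y.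
Proof.
move=> cu; split=> [[d ->]|[d ->]]; first by exists (d * c); rewrite mulrA.
by exists (d / c); rewrite mulrA divrK.
Qed.

Lemma poly_unit_lead_coef (R : idomainType) (p : {poly R}) :
  p \is a GRing.unit -> lead_coef p \is a GRing.unit.
Proof. by rewrite poly_unitE => /andP[/eqP hs hu]; rewrite lead_coefE hs. Qed.

Lemma divides_size (R : idomainType) (p q : {poly R}) :
  q != 0 -> divides p q -> (size p <= size q)%N.
Proof. by move=> q0 [c hc]; rewrite (dvdp_leq q0) // hc dvdp_mulIr. Qed.

Section ZBasis.
Variable V : zmodType.

Lemma Zbasis_coord_mx n p (be : 'I_n -> V) (ga : 'I_p -> V) : is_Zbasis be ->
  exists M : 'M[int]_(n, p), forall j, ga j = \sum_i be i *~ M i j.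
Proof.
move=> [be_span _].
have /all_sig [c hc] : forall j, {c : 'I_n -> int | ga j = \sum_i be i *~ c i}.
  by move=> j; apply: constructive_indefinite_description; apply: be_span.
by exists (\matrix_(i, j) c j i) => j; rewrite hc; apply: eq_bigr => i _; rewrite mxE.
Qed.

Lemma coord_mx_mul n p q (be : 'I_n -> V) (ga : 'I_p -> V) (de : 'I_q -> V)
    (M : 'M[int]_(n, p)) (N : 'M[int]_(p, q)) :
  (forall j, ga j = \sum_i be i *~ M i j) ->
  (forall j, de j = \sum_i ga i *~ N i j) ->
  forall j, de j = \sum_i be i *~ (M *m N) i j.
Proof.
move=> hM hN j; rewrite hN; under eq_bigr => l _ do rewrite hM mulrz_suml.
rewrite exchange_big /=; apply: eq_bigr => i _; rewrite mxE mulrz_sumr.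
by apply: eq_bigr => l _; rewrite mulrzA.
Qed.

Lemma Zbasis_coord_mx_id n (be : 'I_n -> V) (M : 'M[int]_n) : is_Zbasis be ->
  (forall j, be j = \sum_i be i *~ M i j) -> M = 1%:M.
Proof.
move=> [_ be_free] hM; apply/matrixP => i j.
have e : \sum_l be l *~ M l j = \sum_l be l *~ (l == j)%:R.
  by rewrite -hM (bigD1 j) //= big1 ?addr0 ?eqxx // => l /negbTE ->.
by rewrite (be_free _ _ e i) !mxE.
Qed.

Lemma int_mulmx1_leq n p (M : 'M[int]_(n, p)) (N : 'M[int]_(p, n)) :
  M *m N = 1%:M -> (n <= p)%N.
Proof.
pose toQ (X : 'M[int]_(_, _)) := map_mx (intr : int -> rat) X.
move=> MN1; have : toQ _ _ M *m toQ _ _ N = 1%:M by rewrite -map_mxM MN1 map_mx1.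
move=> /(congr1 mxrank); rewrite mxrank1 => <-.
exact: leq_trans (mxrankM_maxl _ _) (rank_leq_col _).
Qed.

Lemma Zbasis_size n p (be : 'I_n -> V) (ga : 'I_p -> V) :
  is_Zbasis be -> is_Zbasis ga -> n = p.
Proof.
move=> hbe hga; have [M hM] := Zbasis_coord_mx ga hbe.
have [N hN] := Zbasis_coord_mx be hga.
have MN1 := Zbasis_coord_mx_id hbe (coord_mx_mul hM hN).
have NM1 := Zbasis_coord_mx_id hga (coord_mx_mul hN hM).
by apply/eqP; rewrite eqn_leq (int_mulmx1_leq MN1) (int_mulmx1_leq NM1).
Qed.

Lemma Zbasis_coord_mx_unit n (be ga : 'I_n -> V) (M : 'M[int]_n) :
  is_Zbasis be -> is_Zbasis ga -> (forall j, ga j = \sum_i be i *~ M i j) ->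
  M \in unitmx.
Proof.
move=> hbe hga hM; have [N hN] := Zbasis_coord_mx be hga.
by have [] := mulmx1_unit (Zbasis_coord_mx_id hbe (coord_mx_mul hM hN)).
Qed.

End ZBasis.

Lemma mulmx_factor (R : comUnitRingType) n (L D : 'M[R]_n) :
  (forall j : 'I_n, exists w, L *m delta_mx j (0 : 'I_1) = D *m w) ->
  exists X, L = D *m X.
Proof.
move=> h; have /all_sig [f hf] : forall j : 'I_n,
    {w : 'cV[R]_n | L *m delta_mx j (0 : 'I_1) = D *m w}.
  by move=> j; apply: constructive_indefinite_description; apply: h.
exists (\matrix_(i, j) f j i 0); apply/matrixP => i j.
have := congr1 (fun M : 'cV[R]_n => M i 0) (hf j); rewrite -colE mxE => ->.
by rewrite !mxE; apply: eq_bigr => l _; rewrite mxE.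
Qed.

(* Both factorisations [P T = D X] and [D = P T Y] exist; cancelling the
   regular matrix [P T] in [P T (1 - Y X) = 0] with its adjugate gives [Y X = 1]. *)
Lemma same_image_equiv (R : idomainType) n (P T D : 'M[{poly R}]_n) :
  P \in unitmx -> \det T != 0 ->
  (forall w : 'cV_n, exists w', P *m (T *m w) = D *m w') ->
  (forall w : 'cV_n, exists w', D *m w = P *m (T *m w')) ->
  exists2 Q, Q \in unitmx & P *m T *m Q = D.
Proof.
move=> Pu dT PTinD DinPT.
have [X hX] : exists X, P *m T = D *m X.
  by apply: mulmx_factor => j; rewrite -mulmxA; apply: PTinD.
have [Y hY] : exists Y, D = P *m T *m Y.
  apply: mulmx_factor => j; have [w ->] := DinPT (delta_mx j 0).
  by exists w; rewrite mulmxA.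
have dPT : \det (P *m T) != 0.
  rewrite det_mulmx mulf_eq0 negb_or dT andbT.
  by apply: contraTneq Pu => h; rewrite unitmxE h unitr0.
have YX : Y *m X = 1%:M.
  have : \adj (P *m T) *m (P *m T *m (1%:M - Y *m X)) = 0.
    by rewrite mulmxBr mulmx1 mulmxA -hY -hX subrr mulmx0.
  rewrite mulmxA mul_adj_mx mul_scalar_mx => /matrixP e.
  apply/eqP; rewrite -subr_eq0 -oppr_eq0 opprB; apply/eqP/matrixP => i j.
  by have := e i j; rewrite !mxE => /eqP; rewrite mulf_eq0 (negbTE dPT) => /eqP.
have [_ Xu] := mulmx1_unit YX.
by exists (invmx X); rewrite ?unitmx_inv // hX mulmxK.
Qed.

Lemma diag_mx_image (R : comPzRingType) n (d : 'rV[R]_n) (u : 'cV[R]_n) :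
  (exists w, u = diag_mx d *m w) <-> forall i, divides (d 0 i) (u i 0).
Proof.
split=> [[w ->] i|hd]; first by exists (w i 0); rewrite mul_diag_mx mxE mulrC.
have /all_sig [c hc] : forall i, {c | u i 0 = c * d 0 i}.
  by move=> i; apply: constructive_indefinite_description; apply: hd.
by exists (\col_i c i); apply/matrixP => i j; rewrite ord1 mul_diag_mx !mxE hc mulrC.
Qed.

Lemma offdiag0_diag_mx (R : pzSemiRingType) n (D : 'M[R]_n) :
  (forall i j, i != j -> D i j = 0) -> D = diag_mx (\row_i D i i).
Proof.
move=> offdiag; apply/matrixP => i j; rewrite [RHS]mxE [X in X *+ _]mxE.
by case: eqVneq => [->|/offdiag ->]; rewrite ?mulr1n ?mulr0n.
Qed.

Lemma offdiag0_image (R : comPzRingType) n (D : 'M[R]_n) (u : 'cV[R]_n) :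
  (forall i j, i != j -> D i j = 0) ->
  (exists w, u = D *m w) <-> forall i, divides (D i i) (u i 0).
Proof.
move=> /offdiag0_diag_mx Ddiag; rewrite {1}Ddiag diag_mx_image.
by split=> h i; have := h i; rewrite mxE.
Qed.

Lemma unit_mulmx_image (R : comUnitRingType) n (P T Q : 'M[R]_n) (u : 'cV[R]_n) :
  P \in unitmx -> Q \in unitmx ->
  (exists w, invmx P *m u = T *m w) <-> (exists w, u = P *m T *m Q *m w).
Proof.
move=> Pu Qu; split=> [[w hw]|[w ->]]; last by exists (Q *m w); rewrite -!mulmxA mulKmx.
exists (invmx Q *m w); rewrite -[_ *m (_ *m w)]mulmxA mulKVmx //.
by rewrite -mulmxA -hw mulKVmx.
Qed.

Lemma equiv_diag_lead_coef_unit (R : idomainType) n (P T Q : 'M[{poly R}]_n) :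
  P \in unitmx -> Q \in unitmx -> \det T \is monic ->
  (forall i j, i != j -> (P *m T *m Q) i j = 0) ->
  forall i, lead_coef ((P *m T *m Q) i i) \is a GRing.unit.
Proof.
move=> Pu Qu dT offdiag i; set D := P *m T *m Q in offdiag *.
have Ddiag := offdiag0_diag_mx offdiag.
have : lead_coef (\det D) \is a GRing.unit.
  rewrite !det_mulmx !lead_coefM (monicP dT) mulr1 unitrM.
  by rewrite !poly_unit_lead_coef // -unitmxE.
by rewrite {1}Ddiag det_diag lead_coef_prod (bigD1 i) //= unitrM mxE => /andP[].
Qed.

Lemma ord_threshold m (P : pred 'I_m) :
  (forall i j : 'I_m, j = i.+1 :> nat -> P i -> P j) ->
  exists2 r, (r <= m)%N & forall i : 'I_m, P i = (r <= i)%N.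
Proof.
move=> Pstep.
have Pmono d (i j : 'I_m) : j = (i + d)%N :> nat -> P i -> P j.
  elim: d j => [|d IH] j hj Pi; first by rewrite (val_inj (etrans hj (addn0 _))).
  have lt_jm : (j.-1 < m)%N by rewrite (leq_ltn_trans (leq_pred j)).
  by apply: (Pstep (Ordinal lt_jm)); [|apply: IH]; do ?[simpl; rewrite hj addnS].
exists (\max_(i | ~~ P i) (nat_of_ord i).+1)%N.
  by apply/bigmax_leqP => i _; exact: ltn_ord.
move=> i; apply/idP/idP => [Pi|].
  apply/bigmax_leqP => j; apply: contraR; rewrite -leqNgt => le_ij.
  by apply: (Pmono (j - i)%N i) => //; rewrite subnKC.
apply: contraLR => nPi; rewrite -ltnNge.
exact: (@leq_bigmax_cond _ _ (fun j : 'I_m => (nat_of_ord j).+1) _ nPi).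
Qed.

Lemma sum_drop_prefix (W : zmodType) m r k (F : 'I_m -> W) (idx : 'I_k -> 'I_m) :
  (forall i, val (idx i) = (r + i)%N) -> (r + k)%N = m ->
  (forall i : 'I_m, (i < r)%N -> F i = 0) ->
  \sum_i F i = \sum_i F (idx i).
Proof.
move=> hidx hm hF; subst m; rewrite big_split_ord /= big1 ?add0r.
  by apply: eq_bigr => i _; congr F; apply: val_inj; rewrite /= hidx.
by move=> i _; apply: hF; rewrite /= ltn_ord.
Qed.

Lemma sum_if_addn (W : zmodType) k n (F : 'I_k -> W) (i0 : 'I_k) :
  \sum_(i < k) (if (n + i0 == n + i)%N then F i else 0) = F i0.
Proof.
rewrite (bigD1 i0) //= eqxx big1 ?addr0 // => i ne_ii0.
by rewrite eqn_add2l; case: eqP => // /val_inj eq_i0i; rewrite eq_i0i eqxx in ne_ii0.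
Qed.

Section Action.
Variables (V : zmodType) (phi : V -> V).
Hypothesis phi_add : forall u v : V, phi (u + v) = phi u + phi v.

Lemma phiB : {morph phi : u v / u - v}.
Proof. by move=> u v; apply: (addIr (phi v)); rewrite -phi_add !subrK. Qed.
HB.instance Definition _ := GRing.isZmodMorphism.Build V V phi phiB.

Lemma iter_phiB j : {morph iter j phi : u v / u - v}.
Proof. by elim: j => [|j IH] u v //=; rewrite IH raddfB. Qed.
HB.instance Definition _ j := GRing.isZmodMorphism.Build V V (iter j phi) (iter_phiB j).

Local Notation act := (polyact phi).
Implicit Types (p q : {poly int}) (v : V).

Lemma polyactBr p : {morph act p : u v / u - v}.
Proof.
by move=> u v; rewrite /polyact -sumrB; apply: eq_bigr => j _; rewrite raddfB mulrzBl.
Qed.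
HB.instance Definition _ p := GRing.isZmodMorphism.Build V V (act p) (polyactBr p).

Lemma polyact_widen n p v : (size p <= n)%N ->
  act p v = \sum_(j < n) iter j phi v *~ p`_j.
Proof.
move=> hn; rewrite /polyact (big_ord_widen _ (fun j => iter j phi v *~ p`_j) hn).
rewrite big_mkcond /=; apply: eq_bigr => j _; case: ltnP => // hj.
by rewrite nth_default // mulrz0.
Qed.

Lemma polyactDl p q v : act (p + q) v = act p v + act q v.
Proof.
set n := maxn (size p) (size q).
rewrite (@polyact_widen n p) ?leq_maxl // (@polyact_widen n q) ?leq_maxr //.
rewrite (@polyact_widen n) ?(leq_trans (size_polyD _ _)) // -big_split /=.
by apply: eq_bigr => j _; rewrite coefD mulrzDr.
Qed.

Lemma polyact0l v : act 0 v = 0.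
Proof. by rewrite /polyact size_poly0 big_ord0. Qed.

Lemma polyactBl p q v : act (p - q) v = act p v - act q v.
Proof. by apply: (addIr (act q v)); rewrite -polyactDl !subrK. Qed.

Lemma polyact_suml I r (P : pred I) (F : I -> {poly int}) v :
  act (\sum_(i <- r | P i) F i) v = \sum_(i <- r | P i) act (F i) v.
Proof. exact: (big_morph (act^~ v) (fun p q => polyactDl p q v) (polyact0l v)). Qed.

Lemma polyact_phi p v : act p (phi v) = phi (act p v).
Proof. by rewrite raddf_sum; apply: eq_bigr => j _; rewrite raddfMz -iterSr. Qed.

Lemma polyactC c v : act c%:P v = v *~ c.
Proof. by rewrite (@polyact_widen 1) ?size_polyC ?leq_b1 // big_ord1 coefC. Qed.

Lemma polyact1 v : act 1 v = v.
Proof. exact: polyactC. Qed.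

Lemma polyactMX p v : act (p * 'X) v = act p (phi v).
Proof.
rewrite (@polyact_widen (size p).+1); last first.
  by rewrite (leq_trans (size_polyMleq _ _)) ?size_polyX ?addn2.
rewrite big_ord_recl coefMX /= mulr0z add0r.
by apply: eq_bigr => j _; rewrite coefMX /= -iterSr.
Qed.

Lemma polyactX v : act 'X v = phi v.
Proof. by rewrite -[X in act X]mul1r polyactMX polyact1. Qed.

Lemma polyactCM c p v : act (c%:P * p) v = act p v *~ c.
Proof.
have [->|c0] := eqVneq c 0; first by rewrite mul0r polyact0l mulr0z.
rewrite (@polyact_widen (size p)) ?size_Cmul //.
by rewrite /polyact mulrz_suml; apply: eq_bigr => j _; rewrite coefCM mulrC mulrzA.
Qed.

Lemma polyactM p q v : act (p * q) v = act p (act q v).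
Proof.
elim/poly_ind: p v => [|p c IH] v; first by rewrite mul0r !polyact0l.
rewrite mulrDl polyactDl -mulrA (mulrC 'X) mulrA polyactMX IH polyactCM.
by rewrite polyactDl polyactMX polyactC polyact_phi.
Qed.

Lemma polyactXn n v : act 'X^n v = iter n phi v.
Proof.
by elim: n v => [|n IH] v; rewrite ?expr0 ?polyact1 // exprS polyactM IH polyactX.
Qed.

Definition polycomb m (g : 'I_m -> V) (u : 'cV[{poly int}]_m) : V :=
  \sum_j act (u j 0) (g j).

Section PolyComb.
Variables (m : nat).
Implicit Types (g h : 'I_m -> V) (u : 'cV[{poly int}]_m).

Lemma polycombB g : {morph polycomb g : u w / u - w}.
Proof.
by move=> u w; rewrite /polycomb -sumrB; apply: eq_bigr => j _; rewrite !mxE polyactBl.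
Qed.
HB.instance Definition _ g := GRing.isZmodMorphism.Build _ V (polycomb g) (polycombB g).

Lemma polycombZ g p u : polycomb g (p *: u) = act p (polycomb g u).
Proof. by rewrite raddf_sum; apply: eq_bigr => j _; rewrite mxE polyactM. Qed.

Lemma polycomb_mulmx g (M : 'M_m) u :
  polycomb g (M *m u) = polycomb (fun l => polycomb g (col l M)) u.
Proof.
rewrite /polycomb; under eq_bigr => j _ do rewrite mxE polyact_suml.
rewrite exchange_big /=; apply: eq_bigr => l _; rewrite raddf_sum.
by apply: eq_bigr => j _; rewrite !mxE mulrC polyactM.
Qed.

Lemma polycomb_const g (z : 'cV[int]_m) :
  polycomb g (map_mx polyC z) = \sum_j g j *~ z j 0.
Proof. by apply: eq_bigr => j _; rewrite mxE polyactC. Qed.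

Lemma eq_polycomb g h u : g =1 h -> polycomb g u = polycomb h u.
Proof. by move=> gh; apply: eq_bigr => j _; rewrite gh. Qed.

Lemma polycomb_delta g i : polycomb g (delta_mx i 0) = g i.
Proof.
rewrite /polycomb (bigD1 i) //= big1 ?addr0 ?mxE ?eqxx ?polyact1 //.
by move=> j /negbTE ji; rewrite mxE ji polyact0l.
Qed.

Lemma presentations_equiv g h (P T D : 'M[{poly int}]_m) :
  P \in unitmx -> \det T != 0 ->
  (forall u, polycomb g (P *m u) = polycomb h u) ->
  (forall u, polycomb h u = 0 <-> exists w, u = T *m w) ->
  (forall u, polycomb g u = 0 <-> exists w, u = D *m w) ->
  exists2 Q, Q \in unitmx & P *m T *m Q = D.
Proof.
move=> Pu dT gPh kerh kerg; apply: same_image_equiv => // w.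
  by apply/kerg; rewrite gPh; apply/kerh; exists w.
have : polycomb g (D *m w) = 0 by apply/kerg; exists w.
rewrite -(mulKVmx Pu (D *m w)) gPh => /kerh [w' hw'].
by exists w'; rewrite -hw' mulKVmx.
Qed.

End PolyComb.

Section DiagonalPresentation.
Variables (m : nat) (g : 'I_m -> V) (s : 'I_m -> {poly int}).
Hypothesis s_lead : forall i, lead_coef (s i) \is a GRing.unit.
Hypothesis s_dvd : forall i j : 'I_m, j = i.+1 :> nat -> divides (s i) (s j).
Hypothesis g_ker : forall u, polycomb g u = 0 <-> forall i, divides (s i) (u i 0).
Hypothesis g_span : forall v, exists u, v = polycomb g u.

Lemma diag_ann i p : act p (g i) = 0 <-> divides (s i) p.
Proof.
rewrite -polycomb_delta -polycombZ g_ker; split.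
  by move/(_ i); rewrite !mxE !eqxx mulr1.
move=> hd j; rewrite !mxE; case: eqVneq => [->|_]; first by rewrite mulr1.
by exists 0; rewrite mulr0 mul0r.
Qed.

Lemma diag_neq0 i : s i != 0.
Proof. by apply: contraTneq (s_lead i) => ->; rewrite lead_coef0 unitr0. Qed.

Lemma diag_nonconst_step (i j : 'I_m) : j = i.+1 :> nat ->
  (1 < size (s i))%N -> (1 < size (s j))%N.
Proof. by move=> /s_dvd /(divides_size (diag_neq0 j)) /(leq_trans _); apply. Qed.

Lemma diag_const_gen0 i : (size (s i) <= 1)%N -> g i = 0.
Proof.
move=> /size1_polyC; set c := (s i)`_0 => si_const.
have := s_lead i; rewrite si_const lead_coefC => c_unit.
rewrite -(polyact1 (g i)); apply/diag_ann; rewrite si_const.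
by exists c^-1%:P; rewrite -polyCM mulVr.
Qed.

Section Threshold.
Variable r : nat.
Hypothesis r_le_m : (r <= m)%N.
Hypothesis nonconst_r : forall i : 'I_m, (1 < size (s i))%N = (r <= i)%N.

Local Notation k := (m - r)%N.

Lemma shift_ordP (i : 'I_k) : (r + i < m)%N.
Proof. by rewrite -ltn_subRL. Qed.

Let sh (i : 'I_k) := Ordinal (shift_ordP i).
Let lc_inv (i : 'I_k) := (lead_coef (s (sh i)))^-1%:P.
Let a (i : 'I_k) := lc_inv i * s (sh i).

Lemma lc_inv_unit i : lc_inv i \is a GRing.unit.
Proof. by apply/rmorph_unit; rewrite unitrV. Qed.

Lemma diag_invariant_monic i : (a i \is monic) /\ (1 < size (a i))%N.
Proof.
split; first by rewrite monicE lead_coefM lead_coefC mulVr.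
by rewrite size_Cmul ?invr_eq0 ?lead_coef_eq0 ?diag_neq0 // nonconst_r leq_addr.
Qed.

Lemma diag_invariant_dvd (i j : 'I_k) : j = i.+1 :> nat -> divides (a i) (a j).
Proof.
move=> ji; apply/divides_mull_unit; first exact: lc_inv_unit.
by apply/divides_mull/s_dvd; rewrite /= ji addnS.
Qed.

Lemma diag_invariant_ann i p :
  (forall q, act p (act q (g (sh i))) = 0) <-> divides (a i) p.
Proof.
rewrite divides_mull_unit ?lc_inv_unit // -diag_ann; split=> [/(_ 1)|hp q].
  by rewrite polyact1.
by rewrite -polyactM mulrC polyactM hp raddf0.
Qed.

Lemma diag_invariant_span v : exists ps : 'I_k -> {poly int},
  v = \sum_(i < k) act (ps i) (g (sh i)).
Proof.
have [u ->] := g_span v; exists (fun i => u (sh i) 0).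
apply: (sum_drop_prefix (F := fun j => act (u j 0) (g j))); rewrite ?subnKC //.
by move=> i ltir; rewrite diag_const_gen0 ?raddf0 // leqNgt nonconst_r -ltnNge.
Qed.

Lemma diag_invariant_direct ps qs :
  \sum_(i < k) act (ps i) (g (sh i)) = \sum_(i < k) act (qs i) (g (sh i)) ->
  forall i, act (ps i) (g (sh i)) = act (qs i) (g (sh i)).
Proof.
move=> eq_pq i; pose u := \sum_j (ps j - qs j) *: delta_mx (sh j) (0 : 'I_1).
have : polycomb g u = 0.
  rewrite raddf_sum /=; under eq_bigr do rewrite polycombZ polycomb_delta polyactBl.
  by rewrite sumrB eq_pq subrr.
have u_sh : u (sh i) 0 = ps i - qs i.
  rewrite summxE (bigD1 i) //= big1 => [|j ji]; rewrite !mxE ?eqxx ?mulr1 ?addr0 //.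
  by rewrite -(inj_eq val_inj) /= eqn_add2l (inj_eq val_inj) eq_sym (negbTE ji) mulr0.
move=> /g_ker /(_ (sh i)) /diag_ann; rewrite u_sh polyactBl.
by move=> /eqP; rewrite subr_eq0 => /eqP.
Qed.

Lemma diag_presentation_RCF_at : has_RCF phi.
Proof.
exists k, (fun i => g (sh i)), a; split.
- exact: diag_invariant_monic.
- exact: diag_invariant_dvd.
- exact: diag_invariant_ann.
- exact: diag_invariant_span.
- exact: diag_invariant_direct.
Qed.

End Threshold.

Lemma diag_presentation_RCF : has_RCF phi.
Proof.
have [r r_le_m nonconst_r] := ord_threshold diag_nonconst_step.
exact: (diag_presentation_RCF_at r_le_m nonconst_r).
Qed.

End DiagonalPresentation.

Section Presentation.
Variables (m : nat) (b : 'I_m -> V) (A : 'M[int]_m).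
Hypothesis b_basis : is_Zbasis b.
Hypothesis A_mat : is_matrix_of b phi A.
Local Notation T := (char_poly_mx A).
Implicit Types (u w : 'cV[{poly int}]_m).

Lemma polycomb_char_poly_col l : polycomb b (col l T) = 0.
Proof.
rewrite /polycomb; under eq_bigr => i _ do rewrite !mxE polyactBl polyactC.
rewrite sumrB -A_mat (bigD1 l) //= big1 ?addr0 ?eqxx ?polyactX ?subrr //.
by move=> i /negbTE ->; rewrite polyact0l.
Qed.

Lemma polycomb_char_poly_mx w : polycomb b (T *m w) = 0.
Proof.
rewrite polycomb_mulmx (eq_polycomb _ polycomb_char_poly_col) /polycomb.
by rewrite big1 // => l _; rewrite raddf0.
Qed.

(* Modulo the columns of [xI - A], multiplication by [x] acts on constant
   vectors as [A]; hence every vector is congruent to a constant one. *)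
Definition const_mod_char u := exists w (z : 'cV[int]_m), u = T *m w + map_mx polyC z.

Lemma const_mod_char0 : const_mod_char 0.
Proof. by exists 0, 0; rewrite mulmx0 map_mx0 addr0. Qed.

Lemma const_mod_charD u u' :
  const_mod_char u -> const_mod_char u' -> const_mod_char (u + u').
Proof.
move=> [w [z ->]] [w' [z' ->]]; exists (w + w'), (z + z').
by rewrite mulmxDr map_mxD addrACA.
Qed.

Lemma const_mod_charX u : const_mod_char u -> const_mod_char ('X *: u).
Proof.
move=> [w [z ->]]; exists ('X *: w + map_mx polyC z), (A *m z).
rewrite scalerDr mulmxDr -scalemxAr map_mxM -!addrA; congr (_ + _).
by rewrite /char_poly_mx mulmxBl mul_scalar_mx subrK.
Qed.

Lemma const_mod_charC c u : const_mod_char u -> const_mod_char (c%:P *: u).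
Proof.
move=> [w [z ->]]; exists (c%:P *: w), (c *: z).
rewrite scalerDr -scalemxAr; congr (_ + _).
by apply/matrixP => i j; rewrite !mxE polyCM.
Qed.

Lemma const_mod_charZ p u : const_mod_char u -> const_mod_char (p *: u).
Proof.
elim/poly_ind: p u => [|p c IH] u hu; first by rewrite scale0r; exact: const_mod_char0.
rewrite scalerDl -scalerA; apply: const_mod_charD; last exact: const_mod_charC.
exact/IH/const_mod_charX.
Qed.

Lemma const_mod_char_all u : const_mod_char u.
Proof.
rewrite (matrix_sum_delta u).
elim/big_ind: _ => [||i _]; [exact: const_mod_char0 | exact: const_mod_charD |].
elim/big_ind: _ => [||j _]; [exact: const_mod_char0 | exact: const_mod_charD |].
apply: const_mod_charZ; exists 0, (delta_mx i j).
by rewrite mulmx0 add0r map_delta_mx.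
Qed.

Lemma presentation_ker u : polycomb b u = 0 <-> exists w, u = T *m w.
Proof.
split; last by move=> [w ->]; exact: polycomb_char_poly_mx.
have [w [z ->]] := const_mod_char_all u.
rewrite raddfD /= polycomb_char_poly_mx add0r polycomb_const => hz; exists w.
suff -> : z = 0 by rewrite map_mx0 addr0.
have [_ /(_ (fun j => z j 0) (fun _ => 0)) b_free] := b_basis.
apply/matrixP => i j; rewrite ord1 mxE; apply: b_free.
by rewrite hz big1 // => l _; rewrite mulr0z.
Qed.

Lemma presentation_span v : exists z : 'cV[int]_m, v = polycomb b (map_mx polyC z).
Proof.
have [c ->] := b_basis.1 v; exists (\col_j c j).
by rewrite polycomb_const; apply: eq_bigr => j _; rewrite mxE.
Qed.

Lemma snf_has_RCF : has_SNF T -> has_RCF phi.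
Proof.
move=> [P [Q [Pu Qu offdiag divs]]].
pose g l := polycomb b (col l (invmx P)).
have gP u : polycomb g u = polycomb b (invmx P *m u) by rewrite polycomb_mulmx.
apply: (@diag_presentation_RCF _ g (fun i => (P *m T *m Q) i i)) => // [i|u|v].
- exact: equiv_diag_lead_coef_unit Pu Qu (char_poly_monic A) offdiag i.
- by rewrite gP presentation_ker (unit_mulmx_image _ _ Pu Qu) offdiag0_image.
- have [z ->] := presentation_span v.
  by exists (P *m map_mx polyC z); rewrite gP mulKmx.
Qed.

End Presentation.

Section CyclicBasis.
Variables (k : nat) (g : 'I_k -> V) (a : 'I_k -> {poly int}).
Hypothesis a_monic : forall i, (a i \is monic) /\ (1 < size (a i))%N.
Hypothesis a_dvd : forall i j : 'I_k,
  nat_of_ord j = (nat_of_ord i).+1 -> divides (a i) (a j).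
Hypothesis g_ann : forall i p,
  (forall q, act p (act q (g i)) = 0) <-> divides (a i) p.
Hypothesis g_span : forall v, exists ps : 'I_k -> {poly int},
  v = \sum_(i < k) act (ps i) (g i).
Hypothesis g_direct : forall ps qs : 'I_k -> {poly int},
  \sum_(i < k) act (ps i) (g i) = \sum_(i < k) act (qs i) (g i) ->
  forall i, act (ps i) (g i) = act (qs i) (g i).

(* The Z-basis of [V] is [phi g_i, ..., phi^(deg a_i - 1) g_i] for each [i]
   (block [i], of length [cyc_len i]), followed by [g_1, ..., g_k]: the
   generators come last so that the matching diagonal matrix
   [diag(1, ..., 1, a_1, ..., a_k)] is in Smith normal form. *)
Definition cyc_len (i : 'I_k) : nat := (size (a i)).-2.
Local Notation start := (block_start cyc_len).
Local Notation J := (blocks_end cyc_len).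

Lemma size_invariant i : size (a i) = (cyc_len i).+2.
Proof. by have [_] := a_monic i; rewrite /cyc_len; case: (size (a i)) => [|[|n]]. Qed.

Lemma invariant_neq0 i : a i != 0.
Proof. by rewrite -size_poly_gt0 size_invariant. Qed.

Lemma invariant_ann i p : act p (g i) = 0 <-> divides (a i) p.
Proof.
rewrite -g_ann; split=> [hp q|/(_ 1)]; last by rewrite polyact1.
by rewrite -polyactM mulrC polyactM hp raddf0.
Qed.

Lemma invariant_dvd_small i p :
  divides (a i) p -> (size p <= (cyc_len i).+1)%N -> p = 0.
Proof.
have [->|p0 /(divides_size p0)] := eqVneq p 0 => //.
by rewrite size_invariant => /leq_trans h /h; rewrite ltnn.
Qed.

Lemma polyact_rmodp i p : act p (g i) = act (Pdiv.Ring.rmodp p (a i)) (g i).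
Proof.
rewrite {1}(Pdiv.RingMonic.rdivp_eq (a_monic i).1 p) polyactDl polyactM.
have -> : act (a i) (g i) = 0 by apply/invariant_ann; exists 1; rewrite mul1r.
by rewrite raddf0 add0r.
Qed.

Lemma size_rmodp_invariant i p :
  (size (Pdiv.Ring.rmodp p (a i)) <= (cyc_len i).+1)%N.
Proof. by rewrite -ltnS -size_invariant Pdiv.Ring.ltn_rmodpN0 ?invariant_neq0. Qed.

Lemma polyact_small i p : (size p <= (cyc_len i).+1)%N ->
  act p (g i) = \sum_(t < cyc_len i) iter t.+1 phi (g i) *~ p`_t.+1 + g i *~ p`_0.
Proof. by move=> hp; rewrite (polyact_widen _ hp) big_ord_recl addrC. Qed.

Definition block_fun (W : zmodType) (G : 'I_k -> nat -> W) (H : 'I_k -> W) (l : nat) : W :=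
  \sum_i (\sum_(t < cyc_len i) (if l == (start i + t)%N then G i t else 0)
          + (if l == (J + i)%N then H i else 0)).

Lemma block_fun_start (W : zmodType) G (H : 'I_k -> W) i t : (t < cyc_len i)%N ->
  block_fun G H (start i + t) = G i t.
Proof.
move=> ht; have notJ (i' : 'I_k) : (start i + t == J + i')%N = false.
  by apply/negbTE; rewrite neq_ltn (leq_trans (block_lt_end ht)) ?leq_addr.
rewrite /block_fun (bigD1 i) //= notJ addr0 [X in _ + X]big1 ?addr0 => [|i' ne_i'i].
  rewrite (bigD1 (Ordinal ht)) //= eqxx big1 ?addr0 // => t' ne_t't.
  case: eqP => // /block_start_inj [//|//|_ /eqP].
  by rewrite -(inj_eq val_inj) in ne_t't; rewrite eq_sym (negbTE ne_t't).
rewrite notJ addr0 big1 // => t' _; case: eqP => // /block_start_inj [//|//|/eqP].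
by rewrite eq_sym (negbTE ne_i'i).
Qed.

Lemma block_fun_end (W : zmodType) G (H : 'I_k -> W) (i : 'I_k) :
  block_fun G H (J + i) = H i.
Proof.
have notstart i' (t : 'I_(cyc_len i')) : (J + i == start i' + t)%N = false.
  by apply/negbTE; rewrite neq_ltn (leq_trans (block_lt_end (ltn_ord t))) ?leq_addr ?orbT.
rewrite /block_fun (bigD1 i) //= eqxx big1 => [|t _]; last by rewrite notstart.
rewrite add0r [X in _ + X]big1 ?addr0 // => i' ne_i'i.
rewrite big1 ?add0r => [|t _]; last by rewrite notstart.
by rewrite eqn_add2l; case: eqP => // /val_inj eq_ii'; rewrite eq_ii' eqxx in ne_i'i.
Qed.

Definition cyclic_vec (l : nat) : V := block_fun (fun i t => iter t.+1 phi (g i)) g l.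

Lemma cyclic_vec_span v : exists z : 'I_(J + k) -> int,
  v = \sum_(l < J + k) cyclic_vec l *~ z l.
Proof.
have [ps ->] := g_span v; pose r i := Pdiv.Ring.rmodp (ps i) (a i).
pose y := block_fun (fun i t => (r i)`_t.+1) (fun i => (r i)`_0).
exists (fun l => y l); rewrite (big_blocks cyc_len _ (fun l => cyclic_vec l *~ y l)).
apply: eq_bigr => i _; rewrite polyact_rmodp polyact_small ?size_rmodp_invariant //.
congr (_ + _); last by rewrite /cyclic_vec /y !block_fun_end.
by apply: eq_bigr => t _; rewrite /cyclic_vec /y !block_fun_start.
Qed.

Definition block_poly (y : nat -> int) (i : 'I_k) : {poly int} :=
  \poly_(s < (cyc_len i).+1) (if s == 0%N then y (J + i)%N else y (start i + s.-1)%N).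

Lemma cyclic_vec_comb (y : nat -> int) :
  \sum_(l < J + k) cyclic_vec l *~ y l = \sum_i act (block_poly y i) (g i).
Proof.
rewrite (big_blocks cyc_len _ (fun l => cyclic_vec l *~ y l)); apply: eq_bigr => i _.
rewrite polyact_small ?size_poly // coef_poly /= /cyclic_vec block_fun_end.
congr (_ + _); apply: eq_bigr => t _.
by rewrite coef_poly ltnS ltn_ord /= block_fun_start.
Qed.

Lemma block_poly_eq0 (y : nat -> int) i : act (block_poly y i) (g i) = 0 ->
  y (J + i)%N = 0 /\ forall t, (t < cyc_len i)%N -> y (start i + t)%N = 0.
Proof.
move=> /invariant_ann /invariant_dvd_small /(_ (size_poly _ _)) y0.
split; first by have := congr1 (coefp 0) y0; rewrite /= coef_poly coef0.
by move=> t ht; have := congr1 (coefp t.+1) y0; rewrite /= coef_poly coef0 ltnS ht.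
Qed.

Lemma cyclic_vec_free (z z' : 'I_(J + k) -> int) :
  \sum_(l < J + k) cyclic_vec l *~ z l = \sum_(l < J + k) cyclic_vec l *~ z' l ->
  forall l, z l = z' l.
Proof.
move=> eq_zz' l; pose y n := \sum_(l' < J + k | val l' == n) (z l' - z' l').
have y_ord (l' : 'I_(J + k)) : y l' = z l' - z' l'.
  by rewrite /y (eq_bigl (pred1 l')) ?big_pred1_eq.
have y0 (i : 'I_k) :
    y (J + i)%N = 0 /\ forall t, (t < cyc_len i)%N -> y (start i + t)%N = 0.
  apply: block_poly_eq0; rewrite -(polyact0l (g i)); apply: g_direct.
  rewrite -cyclic_vec_comb [RHS]big1 => [|i' _]; last exact: polyact0l.
  rewrite (eq_bigr (fun l' : 'I_(J + k) => cyclic_vec l' *~ z l' - cyclic_vec l' *~ z' l')).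
    by rewrite sumrB eq_zz' subrr.
  by move=> l' _; rewrite y_ord mulrzBr.
(* Every index lies in some block: count the nonzero values of [y] blockwise. *)
have : (\sum_(l' < J + k) (y l' != 0 : nat))%N = 0%N.
  rewrite (big_blocks cyc_len _ (fun l' => (y l' != 0 : nat))) big1 // => i _.
  have [-> y0_start] := y0 i; rewrite big1 // => t _.
  by rewrite y0_start ?eqxx.
move/eqP; rewrite sum_nat_eq0 => /forallP /(_ l); rewrite y_ord eqb0 negbK.
by rewrite subr_eq0 => /eqP.
Qed.

Lemma cyclic_vec_Zbasis : is_Zbasis (fun l : 'I_(J + k) => cyclic_vec l).
Proof. by split; [exact: cyclic_vec_span | exact: cyclic_vec_free]. Qed.

Section BlockGenerators.
Variable m : nat.
Hypothesis m_eq : m = (J + k)%N.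

Lemma gen_posP (i : 'I_k) : (J + i < m)%N.
Proof. by rewrite m_eq ltn_add2l. Qed.
Local Notation pos i := (Ordinal (gen_posP i)).

Lemma ord_split_blocks (l : 'I_m) : (J <= l)%N -> exists i, l = pos i.
Proof.
move=> le_Jl; have lt_k : (l - J < k)%N by rewrite ltn_subLR // -m_eq.
by exists (Ordinal lt_k); apply: val_inj; rewrite /= subnKC.
Qed.

Definition block_gens (l : 'I_m) : V :=
  \sum_(i < k) (if val l == (J + i)%N then g i else 0).

Lemma polycomb_block_gens (u : 'cV_m) :
  polycomb block_gens u = \sum_i act (u (pos i) 0) (g i).
Proof.
rewrite /polycomb; under eq_bigr => l _ do rewrite /block_gens raddf_sum.
rewrite exchange_big /=; apply: eq_bigr => i _.
rewrite (bigD1 (pos i)) //= eqxx big1 ?addr0 // => l ne_l.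
by rewrite ifF ?raddf0 //; apply: contraNF ne_l => /eqP eq_l; apply/eqP/val_inj.
Qed.

Definition invariant_diag (l : 'I_m) : {poly int} :=
  if (l < J)%N then 1 else \sum_(i < k) (if val l == (J + i)%N then a i else 0).

Lemma invariant_diag_lt (l : 'I_m) : (l < J)%N -> invariant_diag l = 1.
Proof. by rewrite /invariant_diag => ->. Qed.

Lemma invariant_diag_pos i : invariant_diag (pos i) = a i.
Proof. by rewrite /invariant_diag ltnNge leq_addr /= sum_if_addn. Qed.

Lemma invariant_diag_dvd (i j : 'I_m) : j = i.+1 :> nat ->
  divides (invariant_diag i) (invariant_diag j).
Proof.
move=> ji; case: (ltnP i J) => [lt_iJ|le_Ji].
  by rewrite invariant_diag_lt //; exists (invariant_diag j); rewrite mulr1.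
have le_Jj : (J <= j)%N by rewrite ji (leqW le_Ji).
have [i' ei] := ord_split_blocks le_Ji; have [j' ej] := ord_split_blocks le_Jj.
rewrite ei ej !invariant_diag_pos; apply: a_dvd.
by move: ji; rewrite ei ej /= -addnS => /addnI.
Qed.

Lemma block_gens_ker (u : 'cV_m) :
  polycomb block_gens u = 0 <-> forall l, divides (invariant_diag l) (u l 0).
Proof.
rewrite polycomb_block_gens; split=> [u0 l|u_dvd]; last first.
  by rewrite big1 // => i _; apply/invariant_ann; rewrite -invariant_diag_pos.
case: (ltnP l J) => [lt_lJ|/ord_split_blocks [i ->]].
  by rewrite invariant_diag_lt //; exists (u l 0); rewrite mulr1.
rewrite invariant_diag_pos; apply/invariant_ann; rewrite -(polyact0l (g i)).
apply: (@g_direct (fun i => u (pos i) 0) (fun _ => 0)).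
by rewrite u0 big1 // => i' _; exact: polyact0l.
Qed.

(* Column [start i + t] of [1 + power_mx] is [e_(start i + t) + X^(t+1) e_(J + i)],
   which [block_gens] sends to [phi^(t+1) g_i]. *)
Definition power_mx : 'M[{poly int}]_m := \matrix_(l', l)
  \sum_(i < k) (if val l' == (J + i)%N then
            \sum_(t < cyc_len i) (if val l == (start i + t)%N then 'X^(t.+1) else 0)
          else 0).

Lemma power_mx_sq : power_mx *m power_mx = 0.
Proof.
apply/matrixP => l' l; rewrite !mxE big1 // => l'' _.
case: (ltnP l'' J) => [lt_l''J|le_Jl''].
  rewrite [power_mx l'' l]mxE big1 ?mulr0 // => i _.
  by rewrite ifF //; apply/negbTE; rewrite neq_ltn (leq_trans lt_l''J) ?leq_addr.
rewrite [power_mx l' l'']mxE big1 ?mul0r // => i _; case: ifP => // _.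
rewrite big1 // => t _; rewrite ifF //; apply/negbTE; rewrite neq_ltn.
by rewrite (leq_trans (block_lt_end (ltn_ord t)) le_Jl'') orbT.
Qed.

Lemma unit_power_mx : 1%:M + power_mx \in unitmx.
Proof.
have : (1%:M + power_mx) *m (1%:M - power_mx) = 1%:M.
  by rewrite mulmxBr mulmx1 mulmxDl mul1mx power_mx_sq addr0 addrK.
by case/mulmx1_unit.
Qed.

Lemma polycomb_power_mx (l : 'I_m) :
  polycomb block_gens (col l (1%:M + power_mx)) = cyclic_vec l.
Proof.
rewrite polycomb_block_gens /cyclic_vec /block_fun; apply: eq_bigr => i _.
rewrite !mxE polyactDl addrC; congr (_ + _).
  rewrite /= sum_if_addn polyact_suml; apply: eq_bigr => t _.
  by case: ifP => _; rewrite ?polyact0l ?polyactXn.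
by rewrite eq_sym -(inj_eq val_inj) /=; case: eqP => _; rewrite ?polyact0l ?polyact1.
Qed.

Lemma block_gens_change (b : 'I_m -> V) : is_Zbasis b ->
  exists2 P, P \in unitmx & forall u, polycomb block_gens (P *m u) = polycomb b u.
Proof.
move=> b_basis; have cyc_basis : is_Zbasis (fun l : 'I_m => cyclic_vec l).
  by rewrite m_eq; exact: cyclic_vec_Zbasis.
have [S hS] := Zbasis_coord_mx b cyc_basis.
exists ((1%:M + power_mx) *m map_mx polyC S) => [|u].
  rewrite unitmx_mul unit_power_mx unitmxE det_map_mx rmorph_unit //.
  by rewrite -unitmxE (Zbasis_coord_mx_unit cyc_basis b_basis hS).
rewrite -mulmxA polycomb_mulmx (eq_polycomb _ polycomb_power_mx) polycomb_mulmx.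
apply: eq_polycomb => j; rewrite hS; apply: eq_bigr => l _.
by rewrite !mxE polyactC.
Qed.

End BlockGenerators.

Lemma rcf_char_poly_mx_SNF m (b : 'I_m -> V) (A : 'M[int]_m) :
  is_Zbasis b -> is_matrix_of b phi A -> has_SNF (char_poly_mx A).
Proof.
move=> b_basis A_mat; have m_eq := Zbasis_size b_basis cyclic_vec_Zbasis.
have [P Pu bP] := block_gens_change m_eq b_basis.
pose D := diag_mx (\row_(l < m) invariant_diag l).
have [Q Qu PTQ] : exists2 Q, Q \in unitmx & P *m char_poly_mx A *m Q = D.
  apply: presentations_equiv Pu _ bP (presentation_ker b_basis A_mat) _.
    exact/monic_neq0/char_poly_monic.
  move=> u; rewrite (block_gens_ker m_eq); apply: iff_sym.
  apply: iff_trans (diag_mx_image _ _) _.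
  by split=> h l; have := h l; rewrite mxE; apply.
exists P, Q; rewrite PTQ; split=> // [i j ne_ij|i j ji].
  by rewrite mxE (negbTE ne_ij) mulr0n.
by rewrite !mxE !eqxx !mulr1n; apply: invariant_diag_dvd.
Qed.

End CyclicBasis.
End Action.

Theorem mainTheorem1 (V : zmodType) (m : nat) (b : 'I_m -> V) (phi : V -> V)
    (A : 'M[int]_m)
    (phi_add : forall u v : V, phi (u + v) = phi u + phi v)
    (b_basis : is_Zbasis b)
    (A_mat : is_matrix_of b phi A) :
  has_RCF phi <-> has_SNF (char_poly_mx A).
Proof.
split; last exact: (snf_has_RCF phi_add b_basis A_mat).
move=> [k [g [a [a_monic a_dvd g_ann g_span g_direct]]]].
exact: (rcf_char_poly_mx_SNF phi_add a_monic a_dvd g_ann g_span g_direct b_basis A_mat).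
Qed.
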